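(* If $\{a_n\}_{n\ge0}$ is a pm sequence, then for every $n\ge0$ the polynomial $\sum_{j=0}^{2n} a_j x^{j}/j!$ takes only nonnegative values for all $x\in\mathbb{R}$.
   Context: A sequence of reals $\{m_n\}_{n\ge0}$ is called a pm (positive moment) sequence if there is a positive Borel measure $\mu$ on $\mathbb{R}$ with finite moments of all orders such that $m_n=\int x^n\,\mu(dx)$ for all $n\ge0$. *)

From HB Require Import structures.
From mathcomp Require Import all_boot all_order all_algebra.
From mathcomp Require Import all_classical all_reals all_analysis.
Set Implicit Arguments. Unset Strict Implicit. Unset Printing Implicit Defensive.
Import Order.TTheory GRing.Theory Num.Theory.
Local Open Scope ring_scope.
Local Open Scope classical_set_scope.

(* A positive moment (pm) sequence: there is a (nonnegative) measure mu on the
   Borel sets of R (the canonical measurable structure on a realType) with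
   finite moments of all orders (x^n integrable for every n) such that
   m n = \int x^n dmu for every n. *)
Definition pm_seq (R : realType) (m : nat -> R) : Prop :=
  exists mu : {measure set R -> \bar R},
    (forall n : nat, mu.-integrable [set: R] (fun x : R => ((x ^+ n)%R)%:E)) /\
    (forall n : nat, ((m n)%:E = \int[mu]_(x in [set: R]) ((x ^+ n)%R)%:E)%E).

(* The moment functional of a positive measure is nonnegative on nonnegative
   polynomials, and sum_(j <= 2n) a_j x^j / j! is the value of that functional on
   t |-> e_2n(x t), where e_m(y) = sum_(j <= m) y^j / j! is the truncated
   exponential.  For y >= 0 all terms of e_2n(y) are nonnegative; for y <= 0 the
   Taylor remainder satisfies (-1)^m (e_m(y) - exp y) >= 0, by induction on m:
   its derivative is minus the previous remainder and it vanishes at 0.  For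
   m = 2n this gives e_2n(y) >= exp y > 0. *)

From HB Require Import structures.
From mathcomp Require Import all_boot all_order all_algebra.
From mathcomp Require Import all_classical all_reals all_analysis.
From mathcomp Require Import ring.
Set Implicit Arguments.
Unset Strict Implicit.
Unset Printing Implicit Defensive.
Import Order.TTheory GRing.Theory Num.Theory.
Local Open Scope ring_scope.

Section TruncatedExponential.
Variable R : realType.

Definition exp_trunc (m : nat) : {poly R} := \poly_(j < m.+1) (j`!%:R)^-1.

Lemma horner_exp_trunc m y :
  (exp_trunc m).[y] = \sum_(j < m.+1) y ^+ j / (j`!)%:R.
Proof. by rewrite horner_poly; apply: eq_bigr => j _; rewrite mulrC. Qed.

Lemma exp_trunc0 m : (exp_trunc m).[0] = 1.
Proof.
rewrite horner_exp_trunc big_ord_recl expr0 fact0 divr1 big1 ?addr0 // => j _.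
by rewrite expr0n mul0r.
Qed.

Lemma deriv_exp_trunc m : (exp_trunc m.+1)^`() = exp_trunc m.
Proof.
apply/polyP => j; rewrite coef_deriv !coef_poly ltnS.
case: ltnP => _; last by rewrite mul0rn.
rewrite factS natrM -mulr_natr; field.
by rewrite nat1r !pnatr_eq0 -lt0n fact_gt0.
Qed.

Definition signed_exp_rem (m : nat) (y : R) : R :=
  (-1) ^+ m * ((exp_trunc m).[y] - expR y).

Lemma is_derive_signed_exp_rem m (y : R) :
  is_derive y (1 : R) (signed_exp_rem m.+1) (- signed_exp_rem m y).
Proof.
by apply: is_derive_eq; rewrite deriv_exp_trunc exprS mulN1r scaleNr.
Qed.

Lemma signed_exp_rem_ge0 m (y : R) : y <= 0 -> 0 <= signed_exp_rem m y.
Proof.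
elim: m y => [|m IHm] y y_le0.
  rewrite /signed_exp_rem mul1r horner_exp_trunc big_ord1 expr0 fact0 divr1.
  by rewrite subr_ge0 expR_le1.
have rem0 : signed_exp_rem m.+1 0 = 0.
  by rewrite /signed_exp_rem exp_trunc0 expR0 subrr mulr0.
have rem_derivable z : derivable (signed_exp_rem m.+1) z 1.
  by apply: ex_derive; exact: is_derive_signed_exp_rem.
rewrite -rem0.
apply: (@ler0_derive1_le_cc _ _ y 0 (fun z _ => rem_derivable z)).
- move=> z; rewrite in_itv /= => /andP[_ z_lt0].
  rewrite derive1E (@derive_val _ _ _ _ _ _ _ (is_derive_signed_exp_rem m z)).
  rewrite oppr_le0.
  exact: IHm (ltW z_lt0).
- by apply: derivable_within_continuous => z _; exact: rem_derivable.
- by rewrite in_itv /= y_le0 lexx.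
- by rewrite in_itv /= y_le0 lexx.
- exact: y_le0.
Qed.

Lemma exp_trunc_even_ge0 n (y : R) : 0 <= (exp_trunc (2 * n)).[y].
Proof.
have [y_ge0|y_lt0] := leP 0 y.
  rewrite horner_exp_trunc; apply: sumr_ge0 => j _.
  by rewrite divr_ge0 ?exprn_ge0.
have := signed_exp_rem_ge0 (2 * n) (ltW y_lt0).
rewrite /signed_exp_rem -signr_odd oddM andFb mul1r subr_ge0.
exact: le_trans (expR_ge0 y).
Qed.

End TruncatedExponential.

Lemma pm_seq_lincomb_ge0 (R : realType) (a : nat -> R) (k : nat) (c : nat -> R) :
  pm_seq a -> (forall t, 0 <= \sum_(j < k) c j * t ^+ j) ->
  0 <= \sum_(j < k) c j * a j.
Proof.
move=> [mu [int_moment moment]] poly_ge0.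
have lincomb_integral : ((\sum_(j < k) c j * a j)%:E =
    \int[mu]_(t in [set: R]) (\sum_(j < k) c j * t ^+ j)%:E)%E.
  under eq_integral => t _ do rewrite -sumEFin.
  under eq_integral => t _ do under eq_bigr => j _ do rewrite EFinM.
  rewrite integral_sum //; last by move=> j; exact: integrableZl.
  rewrite -sumEFin; apply: eq_bigr => j _.
  by rewrite integralZl // -moment EFinM.
rewrite -lee_fin lincomb_integral; apply: integral_ge0 => t _.
by rewrite lee_fin.
Qed.

Theorem corollary1 (R : realType) (a : nat -> R) :
  pm_seq a ->
  forall (n : nat) (x : R),
    0 <= \sum_(j < (2 * n).+1) a j * x ^+ j / (j`!)%:R.
Proof.
move=> pm_a n x.
under eq_bigr => j _ do rewrite [a j * _]mulrC mulrAC.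
apply: (pm_seq_lincomb_ge0 (c := fun j => x ^+ j / j`!%:R) pm_a) => t.
have := exp_trunc_even_ge0 n (x * t).
by rewrite horner_exp_trunc; under eq_bigr => j _ do rewrite exprMn mulrAC.
Qed.
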